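(* In the discrete setting described in the context, assume (F2), and let $l_b>0$ be the mesh-independent constant for which $l_b\|\mathbf{p}-\tilde{\mathbf{p}}\|_{\mathbf{M}_p}^2\le\langle\mathbf{b}(\mathbf{p})-\mathbf{b}(\tilde{\mathbf{p}}),\mathbf{p}-\tilde{\mathbf{p}}\rangle$ for all $\mathbf{p},\tilde{\mathbf{p}}\in\mathbf{P}_{\phi\ge0}$ (the best such constant). Then for all $\mathbf{p},\tilde{\mathbf{p}}\in\mathbf{P}_{\phi\ge0}$, $$l_b\langle\mathbf{b}(\mathbf{p})-\mathbf{b}(\tilde{\mathbf{p}}),\mathbf{p}-\tilde{\mathbf{p}}\rangle\le\|\mathbf{b}(\mathbf{p})-\mathbf{b}(\tilde{\mathbf{p}})\|_{\mathbf{M}_p^{-1}}^2 .$$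
   Context: Let $\Omega\subset\mathbb{R}^d$, $d\in\{2,3\}$, be a bounded polyhedral domain with a regular triangulation $\mathcal{T}_h$. Let $W_h$ be the piecewise constant functions, $V_h$ the continuous piecewise (bi)linear vector fields vanishing on $\partial\Omega$, with fixed bases; $\mathbf{p}\in\mathbb{R}^{n_p}$ denotes pressure coefficient vectors. $\mathbf{M}_p$ is the diagonal mass matrix of $W_h$; $\langle\cdot,\cdot\rangle$ is the Euclidean product and $\|\mathbf{v}\|_{\mathbf{M}}^2=\langle\mathbf{M}\mathbf{v},\mathbf{v}\rangle$. $\mathbf{D}_{pu}$ has entries $\langle\nabla\cdot\mathbf{v}_j,w_k\rangle_{L^2}$, $\mathbf{A}_{uu}$ entries $2\mu\langle\varepsilon(\mathbf{v}_j),\varepsilon(\mathbf{v}_k)\rangle_{L^2}+\lambda\langle\nabla\cdot\mathbf{v}_j,\nabla\cdot\mathbf{v}_k\rangle_{L^2}$ ($\mu,\lambda>0$). A saturation law $s_w:\mathbb{R}\to[0,1]$ is given with $s_w(p)=1$ for $p\ge0$ and negative inverse $p_c:(0,1]\to\mathbb{R}_+$, $s_w(-p_c(s))=s$; $p_E(p)=s_w(p)p-\int_{s_w(p)}^1p_c(s)\,ds$. $\mathbf{S}_{pp}(\mathbf{p})=\mathrm{diag}(s_w(\mathbf{p}_k))_k$, $\mathbf{p}_E(\mathbf{p})_k=p_E(\mathbf{p}_k)$. With $\alpha>0$, $N\in(0,\infty]$, given $\boldsymbol{\phi}_0$, $\mathbf{f}_u$: $\boldsymbol{\phi}(\mathbf{p})=\boldsymbol{\phi}_0+\alpha\mathbf{D}_{pu}\mathbf{A}_{uu}^{-1}\mathbf{f}_u+\alpha^2\mathbf{D}_{pu}\mathbf{A}_{uu}^{-1}\mathbf{D}_{pu}^\top\mathbf{p}_E(\mathbf{p})+\tfrac1N\mathbf{M}_p\mathbf{p}_E(\mathbf{p})$,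 $\mathbf{b}(\mathbf{p})=\mathbf{S}_{pp}(\mathbf{p})\boldsymbol{\phi}(\mathbf{p})$, $\mathbf{P}_{\phi\ge0}=\{\mathbf{p}:\boldsymbol{\phi}(\mathbf{p})\in[0,1]\text{ componentwise}\}$. (F2): $s_w$ has a bounded derivative and $\inf_{\mathbf{p}\in\mathbf{P}_{\phi\ge0},\,i}s_w(\mathbf{p}_i)>0$. *)

From HB Require Import structures.
From mathcomp Require Import all_boot all_order all_algebra.
From mathcomp Require Import all_classical all_reals all_analysis.
Set Implicit Arguments. Unset Strict Implicit. Unset Printing Implicit Defensive.
Import Order.TTheory GRing.Theory Num.Theory.
Local Open Scope ring_scope.
Local Open Scope classical_set_scope.

Section Defs.
Variable R : realType.

Definition dotv n (x y : 'cV[R]_n) : R := (x^T *m y) 0 0.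

Definition sqnormM n (M : 'M[R]_n) (v : 'cV[R]_n) : R := dotv (M *m v) v.

Definition pE (sw pc : R -> R) (p : R) : R :=
  sw p * p - Rintegral (@lebesgue_measure R) `[sw p, 1] pc.

Definition pEv (sw pc : R -> R) n (p : 'cV[R]_n) : 'cV[R]_n :=
  \col_k pE sw pc (p k 0).

Definition Spp (sw : R -> R) n (p : 'cV[R]_n) : 'M[R]_n :=
  diag_mx (\row_k sw (p k 0)).

(* phi(p); invN stands for 1/N with N in (0, +oo], i.e. invN in [0, +oo) *)
Definition phiv np nu (Mp : 'M[R]_np) (Dpu : 'M[R]_(np, nu)) (Auu : 'M[R]_nu)
  (alpha invN : R) (phi0 : 'cV[R]_np) (fu : 'cV[R]_nu) (sw pc : R -> R)
  (p : 'cV[R]_np) : 'cV[R]_np :=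
  phi0 + alpha *: (Dpu *m invmx Auu *m fu)
  + alpha ^+ 2 *: (Dpu *m invmx Auu *m Dpu^T *m pEv sw pc p)
  + invN *: (Mp *m pEv sw pc p).

Definition bv np nu (Mp : 'M[R]_np) (Dpu : 'M[R]_(np, nu)) (Auu : 'M[R]_nu)
  (alpha invN : R) (phi0 : 'cV[R]_np) (fu : 'cV[R]_nu) (sw pc : R -> R)
  (p : 'cV[R]_np) : 'cV[R]_np :=
  Spp sw p *m phiv Mp Dpu Auu alpha invN phi0 fu sw pc p.

Definition Pphi np nu (Mp : 'M[R]_np) (Dpu : 'M[R]_(np, nu)) (Auu : 'M[R]_nu)
  (alpha invN : R) (phi0 : 'cV[R]_np) (fu : 'cV[R]_nu) (sw pc : R -> R)
  (p : 'cV[R]_np) : Prop :=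
  forall k, 0 <= phiv Mp Dpu Auu alpha invN phi0 fu sw pc p k 0 <= 1.

End Defs.

From HB Require Import structures.
From mathcomp Require Import all_boot all_order all_algebra.
From mathcomp Require Import all_classical all_reals all_analysis.
From mathcomp Require Import ring lra.
Set Implicit Arguments. Unset Strict Implicit. Unset Printing Implicit Defensive.
Import Order.TTheory GRing.Theory Num.Theory.
Local Open Scope ring_scope.
Local Open Scope classical_set_scope.

(** Only the structure of [M_p] and the strong monotonicity estimate matter:
    for any symmetric positive semidefinite invertible [M], put
    [y = M^-1 (b(p) - b(pt))] and [e = p - pt]; then
    [0 <= ||y - l_b e||_M^2 = ||b(p) - b(pt)||_(M^-1)^2 - 2 l_b <b(p) - b(pt), e> + l_b^2 ||e||_M^2],
    and the last term is at most [l_b <b(p) - b(pt), e>] by strong monotonicity. *)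

Section WeightedNorms.
Variables (R : realType) (n : nat).
Implicit Types (x y d e : 'cV[R]_n) (M : 'M[R]_n) (w : 'rV[R]_n).

Lemma dotvE x y : dotv x y = \sum_i x i 0 * y i 0.
Proof. by rewrite /dotv !mxE; apply: eq_bigr => i _; rewrite !mxE. Qed.

Lemma dotvC x y : dotv x y = dotv y x.
Proof. by rewrite /dotv -[in RHS](trmxK x) -trmx_mul [RHS]mxE. Qed.

Lemma dotvBl x y e : dotv (x - y) e = dotv x e - dotv y e.
Proof. by rewrite !dotvE -sumrB; apply: eq_bigr => i _; rewrite !mxE mulrBl. Qed.

Lemma dotvBr x y e : dotv e (x - y) = dotv e x - dotv e y.
Proof. by rewrite dotvC dotvBl !(dotvC e). Qed.

Lemma dotvZl c x y : dotv (c *: x) y = c * dotv x y.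
Proof. by rewrite !dotvE mulr_sumr; apply: eq_bigr => i _; rewrite mxE mulrA. Qed.

Lemma dotvZr c x y : dotv x (c *: y) = c * dotv x y.
Proof. by rewrite dotvC dotvZl dotvC. Qed.

Lemma dotv_mulmx_sym M x y : M^T = M -> dotv (M *m x) y = dotv x (M *m y).
Proof. by move=> M_sym; rewrite /dotv trmx_mul M_sym mulmxA. Qed.

Lemma sqnormM_subZ M x y c : M^T = M ->
  sqnormM M (x - c *: y) =
  sqnormM M x - 2 * c * dotv (M *m x) y + c ^+ 2 * sqnormM M y.
Proof.
move=> M_sym; rewrite /sqnormM mulmxBr -scalemxAr.
rewrite !dotvBl !dotvBr !dotvZl !dotvZr.
rewrite [dotv (M *m y) x]dotv_mulmx_sym // [dotv y _]dotvC; ring.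
Qed.

Lemma sqnormM_invmx M d : M \in unitmx ->
  sqnormM (invmx M) d = sqnormM M (invmx M *m d).
Proof. by move=> M_unit; rewrite /sqnormM mulKVmx // dotvC. Qed.

Lemma sqnormM_invmx_ge M d e l :
  M^T = M -> M \in unitmx -> (forall v, 0 <= sqnormM M v) -> 0 <= l ->
  l * sqnormM M e <= dotv d e -> l * dotv d e <= sqnormM (invmx M) d.
Proof.
move=> M_sym M_unit M_psd l_ge0 l_mono.
have d_eq : d = M *m (invmx M *m d) by rewrite mulKVmx.
have := M_psd (invmx M *m d - l *: e).
rewrite sqnormM_subZ // -d_eq -sqnormM_invmx // => sq_ge0.
nra.
Qed.

Lemma offdiag0_diag_mx M :
  (forall i j, i != j -> M i j = 0) -> M = diag_mx (\row_i M i i).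
Proof.
move=> offdiag0; apply/matrixP => i j; rewrite !mxE.
by case: eqVneq => [->|/offdiag0->]; rewrite ?mulr1n ?mulr0n.
Qed.

Lemma diag_mx_unitmx w : (forall i, 0 < w 0 i) -> diag_mx w \in unitmx.
Proof.
move=> w_gt0; rewrite unitmxE det_diag unitfE.
by apply/prodf_neq0 => i _; rewrite gt_eqF.
Qed.

Lemma sqnormM_diag_mx_ge0 w v : (forall i, 0 <= w 0 i) -> 0 <= sqnormM (diag_mx w) v.
Proof.
move=> w_ge0; rewrite /sqnormM dotvE mul_diag_mx; apply: sumr_ge0 => i _.
by rewrite mxE -mulrA mulr_ge0 // -expr2 sqr_ge0.
Qed.

End WeightedNorms.

Theorem corollary3 (R : realType) (np nu : nat)
  (Mp : 'M[R]_np) (Dpu : 'M[R]_(np, nu)) (Auu : 'M[R]_nu)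
  (alpha invN : R) (phi0 : 'cV[R]_np) (fu : 'cV[R]_nu) (sw pc : R -> R)
  (lb : R)
  (* M_p: diagonal mass matrix of W_h (positive diagonal) *)
  (HMdiag : forall i j, i != j -> Mp i j = 0)
  (HMpos : forall i, 0 < Mp i i)
  (* A_uu: symmetric positive definite stiffness matrix *)
  (HAsym : Auu^T = Auu)
  (HApd : forall v : 'cV[R]_nu, v != 0 -> 0 < dotv (Auu *m v) v)
  (* parameters: alpha > 0, N in (0, +oo] *)
  (Halpha : 0 < alpha) (HinvN : 0 <= invN)
  (* saturation law and its negative inverse p_c *)
  (Hsw01 : forall p, 0 <= sw p <= 1)
  (Hsw1 : forall p, 0 <= p -> sw p = 1)
  (Hpc : forall s, 0 < s <= 1 -> 0 <= pc s /\ sw (- pc s) = s)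
  (* (F2) *)
  (HF2der : (forall x, derivable sw x 1) /\ exists C, forall x, `|sw^`() x| <= C)
  (HF2inf : exists c, 0 < c /\ forall (p : 'cV[R]_np) i,
      Pphi Mp Dpu Auu alpha invN phi0 fu sw pc p -> c <= sw (p i 0))
  (* l_b > 0 is the best constant in the strong monotonicity estimate *)
  (Hlb_pos : 0 < lb)
  (Hlb : forall p pt : 'cV[R]_np,
      Pphi Mp Dpu Auu alpha invN phi0 fu sw pc p ->
      Pphi Mp Dpu Auu alpha invN phi0 fu sw pc pt ->
      lb * sqnormM Mp (p - pt) <=
      dotv (bv Mp Dpu Auu alpha invN phi0 fu sw pc p
            - bv Mp Dpu Auu alpha invN phi0 fu sw pc pt) (p - pt))
  (Hlb_best : forall l : R,
      (forall p pt : 'cV[R]_np,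
        Pphi Mp Dpu Auu alpha invN phi0 fu sw pc p ->
        Pphi Mp Dpu Auu alpha invN phi0 fu sw pc pt ->
        l * sqnormM Mp (p - pt) <=
        dotv (bv Mp Dpu Auu alpha invN phi0 fu sw pc p
              - bv Mp Dpu Auu alpha invN phi0 fu sw pc pt) (p - pt)) ->
      l <= lb) :
  forall p pt : 'cV[R]_np,
    Pphi Mp Dpu Auu alpha invN phi0 fu sw pc p ->
    Pphi Mp Dpu Auu alpha invN phi0 fu sw pc pt ->
    lb * dotv (bv Mp Dpu Auu alpha invN phi0 fu sw pc p
               - bv Mp Dpu Auu alpha invN phi0 fu sw pc pt) (p - pt)
    <= sqnormM (invmx Mp) (bv Mp Dpu Auu alpha invN phi0 fu sw pc p
                           - bv Mp Dpu Auu alpha invN phi0 fu sw pc pt).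
Proof.
move=> p pt Pp Ppt.
have Mp_diag : Mp = diag_mx (\row_i Mp i i) by exact: offdiag0_diag_mx.
have Mp_sym : Mp^T = Mp by rewrite Mp_diag tr_diag_mx.
have Mp_unit : Mp \in unitmx.
  by rewrite Mp_diag diag_mx_unitmx // => i; rewrite mxE.
have Mp_psd v : 0 <= sqnormM Mp v.
  by rewrite Mp_diag sqnormM_diag_mx_ge0 // => i; rewrite mxE ltW.
exact: sqnormM_invmx_ge Mp_sym Mp_unit Mp_psd (ltW Hlb_pos) (Hlb p pt Pp Ppt).
Qed.
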